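(* Let $\mathbf{A}$ be a real $n\times n$ matrix that is TJS (respectively, STJS). Let $P$ be a permutation of $[n]$ and $\mathbf{P}$ the corresponding permutation matrix. Then $\mathbf{P}\mathbf{A}\mathbf{P}^{-1}$ (obtained from $\mathbf{A}$ by renumbering both rows and columns according to $P$) is TJS (respectively, STJS). In particular, the matrix obtained from $\mathbf{A}$ by reversing the order of both its rows and its columns is TJS (respectively, STJS).
   Context: For $J\subseteq[m]$, $J^c=[m]\setminus J$, an $m\times m$ matrix $(a_{ik})$ is $J$-sign-symmetric if $a_{ik}\ge0$ on $(J\times J)\cup(J^c\times J^c)$ and $a_{ik}\le0$ on $(J\times J^c)\cup(J^c\times J)$; strictly $J$-sign-symmetric if strictly. $\mathbf{A}^{(j)}$ is the $j$th compound matrix (all $j\times j$ minors, index sets in lexicographic order). $\mathbf{A}$ is TJS (resp. STJS) if $\mathbf{A}$ is (strictly) $J$-sign-symmetric for some $J\subseteq[n]$ and every $\mathbf{A}^{(j)}$, $j=2,\ldots,n$, is (strictly) $J_j$-sign-symmetric for some subset $J_j$ of its index set. *)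

From HB Require Import structures.
From mathcomp Require Import all_boot all_order all_algebra all_fingroup.
Set Implicit Arguments. Unset Strict Implicit. Unset Printing Implicit Defensive.
Import Order.TTheory GRing.Theory Num.Theory.
Local Open Scope ring_scope.

(* j-element subsets of [n] = {0,..,n-1}: the index set of the j-th compound *)
Notation ksub n j := {I : {set 'I_n} | #|I| == j}.

(* the a-th element (0-based, increasing order) of the j-subset I *)
Definition ksub_idx (n j : nat) (I : ksub n j) (a : 'I_j) : 'I_n :=
  @enum_val _ (mem (val I)) (cast_ord (esym (eqP (valP I))) a).

(* j-th compound matrix: entry (I,K) is the minor with rows I, columns K,
   both taken in increasing order *)
Definition compound (R : comNzRingType) (n j : nat) (A : 'M[R]_n)
  (I K : ksub n j) : R :=
  \det (\matrix_(a < j, b < j) A (ksub_idx I a) (ksub_idx K b)).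

Definition JSS (R : numDomainType) (T : finType) (a : T -> T -> R)
  (J : {set T}) : Prop :=
  forall i k, if (i \in J) == (k \in J) then 0 <= a i k else a i k <= 0.

Definition SJSS (R : numDomainType) (T : finType) (a : T -> T -> R)
  (J : {set T}) : Prop :=
  forall i k, if (i \in J) == (k \in J) then 0 < a i k else a i k < 0.

Definition TJS (R : realFieldType) (n : nat) (A : 'M[R]_n) : Prop :=
  (exists J : {set 'I_n}, JSS (fun i k => A i k) J) /\
  forall j : nat, (2 <= j <= n)%N ->
    exists J : {set ksub n j}, JSS (compound A) J.

Definition STJS (R : realFieldType) (n : nat) (A : 'M[R]_n) : Prop :=
  (exists J : {set 'I_n}, SJSS (fun i k => A i k) J) /\
  forall j : nat, (2 <= j <= n)%N ->
    exists J : {set ksub n j}, SJSS (compound A) J.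

Definition revmx (R : Type) (n : nat) (A : 'M[R]_n) : 'M[R]_n :=
  \matrix_(i, k) A (rev_ord i) (rev_ord k).

From HB Require Import structures.
From mathcomp Require Import all_boot all_order all_algebra all_fingroup.
Set Implicit Arguments. Unset Strict Implicit. Unset Printing Implicit Defensive.
Import Order.TTheory GRing.Theory Num.Theory.
Local Open Scope ring_scope.

(* Renumbering rows and columns of A by s sends the minor with row set I and
   column set K to the minor of A with row set s(I) and column set s(K), up to
   the signs of the two permutations sorting s restricted to I and to K.  So
   every compound matrix of the conjugate is a signature-twisted reindexing of
   the corresponding compound of A, and such a twist preserves (strict)
   J-sign-symmetry after replacing J by its symmetric difference with the set
   of twisted indices. *)

Section SignSymmetry.
Variable R : numDomainType.

(* [pos] is [0 <= _] for sign-symmetry and [0 < _] for strict sign-symmetry. *)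
Definition sign_symmetric (T : finType) (pos : pred R) (a : T -> T -> R)
    (J : {set T}) :=
  forall i k, pos ((-1) ^+ ((i \in J) != (k \in J)) * a i k).

Lemma JSS_sign_symmetric (T : finType) (a : T -> T -> R) J :
  JSS a J <-> sign_symmetric [pred x | 0 <= x] a J.
Proof.
split=> H i k; have := H i k;
  by case: (i \in J); case: (k \in J); rewrite /= ?mul1r ?mulN1r ?oppr_ge0.
Qed.

Lemma SJSS_sign_symmetric (T : finType) (a : T -> T -> R) J :
  SJSS a J <-> sign_symmetric [pred x | 0 < x] a J.
Proof.
split=> H i k; have := H i k;
  by case: (i \in J); case: (k \in J); rewrite /= ?mul1r ?mulN1r ?oppr_gt0.
Qed.

Lemma sign_symmetric_twist (T T' : finType) (pos : pred R) (a : T' -> T' -> R)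
    (b : T -> T -> R) (f : T -> T') (e : T -> bool) (J : {set T'}) :
  (forall i k, b i k = (-1) ^+ (e i (+) e k) * a (f i) (f k)) ->
  sign_symmetric pos a J ->
  sign_symmetric pos b [set i | (f i \in J) (+) e i].
Proof.
move=> Hb HJ i k; rewrite !inE Hb mulrA -signr_addb.
suff -> : ((f i \in J) (+) e i != (f k \in J) (+) e k) (+) (e i (+) e k)
          = ((f i \in J) != (f k \in J)) by exact: HJ.
by case: (f i \in J); case: (f k \in J); case: (e i); case: (e k).
Qed.

Definition totally_sign_symmetric (pos : pred R) n (A : 'M[R]_n) :=
  (exists J : {set 'I_n}, sign_symmetric pos (fun i k => A i k) J) /\
  forall j, (2 <= j <= n)%N ->
    exists J : {set ksub n j}, sign_symmetric pos (compound A) J.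

End SignSymmetry.

Lemma TJS_totally_sign_symmetric (R : realFieldType) n (A : 'M[R]_n) :
  TJS A <-> totally_sign_symmetric [pred x | 0 <= x] A.
Proof.
split=> -[[J /JSS_sign_symmetric HJ] Hc];
  by split=> [|j /Hc [J' /JSS_sign_symmetric]]; [exists J | exists J'].
Qed.

Lemma STJS_totally_sign_symmetric (R : realFieldType) n (A : 'M[R]_n) :
  STJS A <-> totally_sign_symmetric [pred x | 0 < x] A.
Proof.
split=> -[[J /SJSS_sign_symmetric HJ] Hc];
  by split=> [|j /Hc [J' /SJSS_sign_symmetric]]; [exists J | exists J'].
Qed.

Lemma injective_factor_perm j (T : finType) (u v : 'I_j -> T) :
  injective u -> (forall a, exists b, v b = u a) ->
  exists sg : 'S_j, forall a, u a = v (sg a).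
Proof.
move=> u_inj u_sub_v.
pose f a := odflt a [pick b | v b == u a].
have vf a : v (f a) = u a.
  rewrite /f; case: pickP => [b /eqP //|Hnone].
  by have [b Hb] := u_sub_v a; move: (Hnone b); rewrite Hb eqxx.
have f_inj : injective f by move=> a a' faa'; apply: u_inj; rewrite -!vf faa'.
by exists (perm f_inj) => a; rewrite permE vf.
Qed.

Lemma det_row_col_perm (R : comNzRingType) j (M : 'M[R]_j) (sg tau : 'S_j) :
  \det (\matrix_(a, b) M (sg a) (tau b)) = (-1) ^+ (sg (+) tau) * \det M.
Proof.
have -> : \matrix_(a, b) M (sg a) (tau b) = row_perm sg (col_perm tau M).
  by apply/matrixP => a b; rewrite !mxE.
rewrite row_permE col_permE !det_mulmx !det_perm odd_permV signr_addb.
by rewrite [\det M * _]mulrC mulrA.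
Qed.

Section KSubsets.
Variables n j : nat.

Lemma ksub_idx_inj (I : ksub n j) : injective (ksub_idx I).
Proof. by move=> a b /enum_val_inj /cast_ord_inj. Qed.

Lemma ksub_idx_in (I : ksub n j) a : ksub_idx I a \in val I.
Proof. exact: enum_valP. Qed.

Lemma ksub_idx_onto (I : ksub n j) x : x \in val I ->
  exists a, ksub_idx I a = x.
Proof.
move=> Ix; exists (cast_ord (eqP (valP I)) (enum_rank_in Ix x)).
by rewrite /ksub_idx cast_ordK enum_rankK_in.
Qed.

Lemma card_perm_ksub (s : 'S_n) (I : ksub n j) : #|s @: val I| == j.
Proof. by rewrite card_imset ?(valP I) //; exact: perm_inj. Qed.

Definition perm_ksub (s : 'S_n) (I : ksub n j) : ksub n j :=
  exist (fun X : {set 'I_n} => #|X| == j) (s @: val I) (card_perm_ksub s I).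

Lemma perm_ksub_idx (s : 'S_n) (I : ksub n j) :
  exists sg : 'S_j, forall a, s (ksub_idx I a) = ksub_idx (perm_ksub s I) (sg a).
Proof.
apply: injective_factor_perm => [a b /perm_inj /ksub_idx_inj //|a].
by apply: ksub_idx_onto; apply: imset_f; exact: ksub_idx_in.
Qed.

Lemma compound_reindex (R : comNzRingType) (A B : 'M[R]_n) (s : 'S_n) :
  (forall i k, B i k = A (s i) (s k)) ->
  exists e : ksub n j -> bool, forall I K,
    compound B I K = (-1) ^+ (e I (+) e K)
                     * compound A (perm_ksub s I) (perm_ksub s K).
Proof.
move=> BE; have [sg Hsg] := fin_all_exists (perm_ksub_idx s).
exists (fun I => odd_perm (sg I)) => I K; rewrite /compound -det_row_col_perm.
by congr (\det _); apply/matrixP => a b; rewrite !mxE BE !Hsg.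
Qed.

End KSubsets.

Lemma totally_sign_symmetric_reindex (R : realFieldType) (pos : pred R) n
    (A B : 'M[R]_n) (s : 'S_n) :
  (forall i k, B i k = A (s i) (s k)) ->
  totally_sign_symmetric pos A -> totally_sign_symmetric pos B.
Proof.
move=> BE [[J HJ] Hc]; split.
  eexists; apply: (sign_symmetric_twist (e := fun=> false) _ HJ) => i k.
  by rewrite BE mul1r.
move=> j /Hc [J' HJ']; have [e Be] := compound_reindex j BE.
by eexists; exact: sign_symmetric_twist Be HJ'.
Qed.

Lemma conj_perm_mxE (R : realFieldType) n (A : 'M[R]_n) (s : 'S_n) i k :
  (perm_mx s *m A *m invmx (perm_mx s)) i k = A (s i) (s k).
Proof.
have -> : invmx (perm_mx s) = perm_mx s^-1 :> 'M[R]_n.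
  rewrite -[LHS]mul1mx -(perm_mx1 R n) -(mulVg s) perm_mxM -mulmxA.
  by rewrite mulmxV ?unitmx_perm // mulmx1.
by rewrite -col_permE -row_permE !mxE.
Qed.

Definition rev_perm n : 'S_n := perm (@rev_ord_inj n).

Lemma revmxE (R : Type) n (A : 'M[R]_n) i k :
  revmx A i k = A (rev_perm n i) (rev_perm n k).
Proof. by rewrite !permE mxE. Qed.

Theorem proposition30 (R : realFieldType) (n : nat) (A : 'M[R]_n) (s : 'S_n) :
  (TJS A -> TJS (perm_mx s *m A *m invmx (perm_mx s))) /\
  (STJS A -> STJS (perm_mx s *m A *m invmx (perm_mx s))) /\
  (TJS A -> TJS (revmx A)) /\
  (STJS A -> STJS (revmx A)).
Proof.
have conjE := conj_perm_mxE A s; have revE := revmxE A.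
split; last split; last split.
- by move/TJS_totally_sign_symmetric/(totally_sign_symmetric_reindex conjE)
     /TJS_totally_sign_symmetric.
- by move/STJS_totally_sign_symmetric/(totally_sign_symmetric_reindex conjE)
     /STJS_totally_sign_symmetric.
- by move/TJS_totally_sign_symmetric/(totally_sign_symmetric_reindex revE)
     /TJS_totally_sign_symmetric.
- by move/STJS_totally_sign_symmetric/(totally_sign_symmetric_reindex revE)
     /STJS_totally_sign_symmetric.
Qed.
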